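(* Let $D$ be a connected link diagram with $n$ ordered crossings, let $\mathbb{G}$ be its all-$A$ ribbon graph described by the permutations $(\sigma_0,\sigma_1,\sigma_2)$ of $\{1,\dots,2n\}$ as in the context, and let $\mathbb{Q}$ be a quasi-tree of $\mathbb{G}$. Define the permutation $\sigma$ of $\{1,\dots,2n\}$ by $$\sigma(i)=\begin{cases}\sigma_0(i) & \text{if } i\notin\mathbb{Q},\\ \sigma_2^{-1}(i) & \text{if } i\in\mathbb{Q}.\end{cases}$$ Then $\mathbb{Q}$ corresponds to the ordered chord diagram $C_{\mathbb{Q}}$ whose consecutive markings in the positive direction are given by $\sigma$ (i.e. the marks read $i,\sigma(i),\sigma^2(i),\dots$ around the circle, with chords joining $2k-1$ and $2k$ for each $k$); this chord diagram parametrizes the single boundary curve $\gamma_{\mathbb{Q}}$ of the ribbon surface of $\mathbb{Q}$, each half-edge being marked once along $\gamma_{\mathbb{Q}}$.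
   Context: Let $D$ be a connected link diagram with crossings numbered $1,\dots,n$. Each crossing has an $A$-smoothing and a $B$-smoothing (Kauffman's convention); the all-$A$ state smooths every crossing by $A$. Position each crossing so its strands are parallel to $y=x$ and $y=-x$; the $i$-th crossing gives two half-edges labelled $2i-1$ and $2i$, marked on the all-$A$ state circles near the crossing in the half-planes $y>x$ and $y<x$ respectively. Orient each all-$A$ state circle counterclockwise if it is nested inside an even number of other state circles and clockwise otherwise (this is the positive direction). Let $\sigma_0$ be the permutation of $\{1,\dots,2n\}$ sending each mark to the next mark met going in the positive direction along its state circle, $\sigma_1=\prod_{i=1}^n(2i-1,\,2i)$, and $\sigma_2=\sigma_1\circ\sigma_0^{-1}$. The all-$A$ ribbon graph $\mathbb{G}$ has the orbits of $\sigma_0$ (the all-$A$ state circles) as vertices, the orbits of $\sigma_1$ (crossings) as edges, with cyclic order at vertices given by $\sigma_0$; as a surface it consists of a disk for each vertex and an untwisted band for each edge, forming an orientable surface. A spanning subgraph $\mathbb{H}$ has all vertices of $\mathbb{G}$ and a subset of its edges; a half-edge $i$ is said to be in $\mathbb{H}$ if its edge is. The faces of $\mathbb{H}$ are the boundary components of the surface formed by the vertex disks and the bands of edges of $\mathbb{H}$. A quasi-tree is a spanning subgraph with exactly one face; for a quasi-tree $\mathbb{Q}$, $\gamma_{\mathbb{Q}}$ denotes this single boundary curve. An ordered chord diagram is a circle marked with $\{1,\dots,2n\}$ in some order with chords joining each pair $\{2i-1,2i\}$. *)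

From mathcomp Require Import all_boot all_fingroup.

Set Implicit Arguments. Unset Strict Implicit. Unset Printing Implicit Defensive.

(* Marks (half-edges) 1..2n of the paper are represented 0-indexed as
   'I_(n.*2): paper mark m <-> ordinal m-1.  The paper's pair {2i-1,2i}
   becomes {2(i-1), 2(i-1)+1}, and crossing/edge i becomes edge i-1 : 'I_n,
   i.e. half-edge k belongs to edge k./2. *)

Lemma partner_lt n (k : 'I_(n.*2)) : (if odd k then k.-1 else k.+1) < n.*2.
Proof.
move: (ltn_ord k); case: ifP => Ho Hk.
- exact: leq_ltn_trans (leq_pred _) Hk.
- rewrite ltn_neqAle Hk andbT; apply/negP => /eqP E.
  by move: (odd_double n); rewrite -E /= Ho.
Qed.

Definition partner n (k : 'I_(n.*2)) : 'I_(n.*2) := Ordinal (partner_lt k).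

Lemma partnerK n : involutive (@partner n).
Proof.
move=> k; apply: val_inj => /=.
case: k => m _ /=.
case Ho: (odd m) => /=.
- by case: m Ho => [|m] //= /negbTE ->.
- by rewrite Ho.
Qed.

Definition sigma1 n : {perm 'I_(n.*2)} := perm (can_inj (@partnerK n)).

(* sigma_2 = sigma_1 o sigma_0^{-1}; in mathcomp (s * t) x = t (s x). *)
Definition sigma2 n (sigma0 : {perm 'I_(n.*2)}) : {perm 'I_(n.*2)} :=
  (sigma0^-1 * sigma1 n)%g.

Definition half_in n (H : {set 'I_n}) (k : 'I_(n.*2)) : bool :=
  [exists e in H, val e == k./2].

Definition sigmaQ n (sigma0 : {perm 'I_(n.*2)}) (H : {set 'I_n})
  (i : 'I_(n.*2)) : 'I_(n.*2) :=
  if half_in H i then ((sigma2 sigma0)^-1)%g i else sigma0 i.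

(* ---------------------------------------------------------------------
   Combinatorial model of the boundary of the ribbon surface of the
   spanning subgraph H (vertex disks bounded by the all-A state circles,
   traversed in the positive direction given by sigma0, plus one untwisted
   band for each edge of H).  The boundary is a disjoint union of oriented
   closed curves, each a cyclic concatenation of arcs of two kinds:
   * (false, i) "vertex arc": the arc of the state circle leaving the mark i
       (leaving the point i if i is not in H, resp. the right end i^+ of the
       band foot at i if i is in H) and running in the positive direction up
       to the next mark sigma0 i (to the point sigma0 i, resp. the left end
       (sigma0 i)^- of the band foot at sigma0 i);
   * (true, i), for i in H, "band arc": the side of the band of the edge of i
       running from i^- to (partner i)^+ (the band being untwisted, the side
       starting to the left of its foot at i ends to the right of its foot at
       the partner).
   [bsucc a] is the arc following a along the boundary. *)
Definition barc n := (bool * 'I_(n.*2))%type.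

Definition valid_arc n (H : {set 'I_n}) (a : barc n) : bool :=
  a.1 ==> half_in H a.2.

Definition bsucc n (sigma0 : {perm 'I_(n.*2)}) (H : {set 'I_n}) (a : barc n)
  : barc n :=
  if a.1 then (false, sigma1 n a.2)
  else (half_in H (sigma0 a.2), sigma0 a.2).

(* The faces of H are the boundary curves, i.e. the bsucc-cycles of valid
   arcs.  H is a quasi-tree iff there is exactly one such curve, i.e. all
   valid arcs lie on the same cycle. *)
Definition quasi_tree n (sigma0 : {perm 'I_(n.*2)}) (H : {set 'I_n}) : Prop :=
  forall a b : barc n, valid_arc H a -> valid_arc H b ->
    fconnect (bsucc sigma0 H) a b.

(* Marking of the half-edges along the boundary: a half-edge i not in H is
   the point at the start of the vertex arc (false, i); a half-edge i in H is
   marked on the band side (true, i). *)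
Definition mark_at n (H : {set 'I_n}) (a : barc n) : option 'I_(n.*2) :=
  if a.1 then Some a.2 else if half_in H a.2 then None else Some a.2.

Definition mark_arc n (H : {set 'I_n}) (i : 'I_(n.*2)) : barc n :=
  (half_in H i, i).

(* Follow the boundary curve gamma_Q arc by arc and record the last mark met so
   far.  Along a vertex arc leaving a mark i outside Q the next mark is sigma0 i;
   a mark i in Q sits on a band side, which leads to the partner half-edge and
   then along the state circle to sigma0 (partner i) = sigma2^-1 i.  So each
   step of the boundary either keeps the last mark or advances it by sigma, and
   since a quasi-tree has a single boundary curve meeting every mark, sigma is a
   single cycle. *)
From mathcomp Require Import all_boot all_fingroup.

Lemma partner_half n (k : 'I_(n.*2)) : (partner k)./2 = k./2.
Proof.
rewrite /= -[in LHS](odd_double_half k); case: (odd k) => /=.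
  by rewrite odd_double /= doubleK.
by rewrite add0n odd_double -[(_.*2).+1]/(true + _.*2) half_bit_double.
Qed.

Lemma sigma1E n (k : 'I_(n.*2)) : sigma1 n k = partner k.
Proof. by rewrite permE. Qed.

Lemma half_in_partner n (H : {set 'I_n}) (k : 'I_(n.*2)) :
  half_in H (partner k) = half_in H k.
Proof. by rewrite /half_in partner_half. Qed.

Section Boundary.

Variables (n : nat) (sigma0 : {perm 'I_(n.*2)}) (H : {set 'I_n}).

Local Notation bsucc := (bsucc sigma0 H).
Local Notation sigmaQ := (sigmaQ sigma0 H).

Lemma sigmaQ_in i : half_in H i -> sigmaQ i = sigma0 (partner i).
Proof.
move=> Hi; rewrite /sigmaQ Hi /sigma2 invMg invgK permM; congr (sigma0 _).
by apply: (@perm_inj _ (sigma1 n)); rewrite permKV sigma1E partnerK.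
Qed.

Lemma sigmaQ_out i : ~~ half_in H i -> sigmaQ i = sigma0 i.
Proof. by rewrite /sigmaQ => /negbTE ->. Qed.

Lemma mark_arc_valid i : valid_arc H (mark_arc H i).
Proof. exact: implybb. Qed.

Lemma bsucc_valid a : valid_arc H (bsucc a).
Proof. by case: a => [[] i]; rewrite /valid_arc /bsucc //= implybb. Qed.

Lemma mark_at_mark_arc i : mark_at H (mark_arc H i) = Some i.
Proof. by rewrite /mark_at /=; case: (half_in H i). Qed.

Lemma mark_at_inj a i :
  valid_arc H a -> mark_at H a = Some i -> a = mark_arc H i.
Proof.
case: a => [[] j]; rewrite /valid_arc /mark_at /mark_arc /=.
  by move=> Hj [<-]; rewrite Hj.
by move=> _; case Hj: (half_in H j) => // -[<-]; rewrite Hj.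
Qed.

Lemma bsucc_mark_arc_out i :
  ~~ half_in H i -> bsucc (mark_arc H i) = mark_arc H (sigmaQ i).
Proof. by move=> Hi; rewrite sigmaQ_out // /bsucc /mark_arc (negbTE Hi). Qed.

Lemma bsucc_mark_arc_in i :
  half_in H i -> bsucc (mark_arc H i) = (false, partner i).
Proof. by move=> Hi; rewrite /bsucc /mark_arc Hi /= sigma1E. Qed.

Lemma bsucc2_mark_arc_in i :
  half_in H i -> iter 2 bsucc (mark_arc H i) = mark_arc H (sigmaQ i).
Proof. by move=> Hi; rewrite /= bsucc_mark_arc_in // sigmaQ_in. Qed.

Lemma next_mark i :
  exists k, 0 < k /\
    mark_at H (iter k bsucc (mark_arc H i)) = Some (sigmaQ i) /\
    (forall l, 0 < l < k -> mark_at H (iter l bsucc (mark_arc H i)) = None).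
Proof.
have [Hi | Hi] := boolP (half_in H i).
  exists 2; rewrite bsucc2_mark_arc_in // mark_at_mark_arc; do !split => //.
  case=> [|[|l]] //= _.
  by rewrite bsucc_mark_arc_in // /mark_at /= half_in_partner Hi.
exists 1; rewrite /= bsucc_mark_arc_out // mark_at_mark_arc; do !split => //.
by case=> [|[|l]].
Qed.

(* The last mark met along the boundary up to and including the arc [a]: the
   vertex arc leaving a band foot at [j] comes right after the band side that
   carries the mark [partner j]. *)
Definition last_mark (a : barc n) : 'I_(n.*2) :=
  if a.1 || ~~ half_in H a.2 then a.2 else partner a.2.

Lemma last_mark_mark_arc i : last_mark (mark_arc H i) = i.
Proof. by rewrite /last_mark /=; case: (half_in H i). Qed.

Lemma last_mark_bsucc a : valid_arc H a ->
  last_mark (bsucc a) = last_mark a \/ last_mark (bsucc a) = sigmaQ (last_mark a).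
Proof.
have last_mark_vertex j : last_mark (half_in H j, j) = j.
  by rewrite /last_mark /=; case: (half_in H j).
case: a => [[] i]; rewrite /valid_arc /bsucc /= => Hi.
  by left; rewrite sigma1E /last_mark /= half_in_partner Hi partnerK.
right; rewrite last_mark_vertex /last_mark /=.
have [Hi' | Hi'] := boolP (half_in H i); last by rewrite sigmaQ_out.
by rewrite sigmaQ_in ?half_in_partner // partnerK.
Qed.

Lemma last_mark_iter m a : valid_arc H a ->
  fconnect sigmaQ (last_mark a) (last_mark (iter m bsucc a)).
Proof.
elim: m a => [|m IH] a va; first exact: connect0.
rewrite iterSr; apply: connect_trans (IH _ (bsucc_valid a)).
by case: (last_mark_bsucc a va) => ->; [exact: connect0 | exact: fconnect1].
Qed.

End Boundary.

Theorem proposition1 (n : nat) (sigma0 : {perm 'I_(n.*2)}) (H : {set 'I_n}) :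
  quasi_tree sigma0 H ->
  (* sigma is a single cycle through all 2n marks: C_Q is one circle *)
  (forall i j : 'I_(n.*2), fconnect (sigmaQ sigma0 H) i j) /\
  (* each mark appears once along gamma_Q, and the next mark met in the
     positive direction after i is sigma(i) *)
  (forall i : 'I_(n.*2),
     mark_at H (mark_arc H i) = Some i /\
     (forall a : barc n, valid_arc H a -> mark_at H a = Some i ->
        a = mark_arc H i) /\
     exists k, 0 < k /\
       mark_at H (iter k (bsucc sigma0 H) (mark_arc H i)) = Some (sigmaQ sigma0 H i) /\
       (forall l, 0 < l < k ->
          mark_at H (iter l (bsucc sigma0 H) (mark_arc H i)) = None)).
Proof.
move=> QT; split=> [i j | i].
  rewrite -(last_mark_mark_arc _ H i) -(last_mark_mark_arc _ H j).
  have /iter_findex <- := QT _ _ (mark_arc_valid _ H i) (mark_arc_valid _ H j).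
  exact/last_mark_iter/mark_arc_valid.
split; first exact: mark_at_mark_arc.
split; first by move=> a; apply: mark_at_inj.
exact: next_mark.
Qed.
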